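(* Let $X_n=(\mathbb{C}^n,\|\cdot\|)$ be a Banach lattice and $J\subset\mathbb{N}_0^n$ a finite index set. Then $\boldsymbol{\lambda}\big(\mathcal{P}_J(X_n)\big)\le\widehat{\boldsymbol{\lambda}}\big(\mathcal{P}_J(X_n)\big)$.
   Context: A Banach lattice $X_n=(\mathbb{C}^n,\|\cdot\|)$ is a norm with $\|z\|\le\|w\|$ whenever $|z_k|\le|w_k|$ for all $k$. $\mathcal{P}_J(X_n)$ is the space of polynomials $\sum_{\alpha\in J}c_\alpha z^\alpha$ with norm $\sup_{z\in B_{X_n}}|P(z)|$, $B_{X_n}$ the open unit ball. $\boldsymbol{\lambda}(E)$ is the projection constant: supremum over Banach spaces $Y$ and isometric embeddings $I:E\to Y$ of the infimum of norms of projections from $Y$ onto $I(E)$. $c_{X_n}(\alpha)=1/\sup_{z\in B_{X_n}}|z^\alpha|$ and $\widehat{\boldsymbol{\lambda}}(\mathcal{P}_J(X_n))=\sup_{z\in B_{X_n}}\sum_{\alpha\in J}c_{X_n}(\alpha)|z^\alpha|$. *)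

From HB Require Import structures.
From mathcomp Require Import all_boot all_order all_algebra.
From mathcomp Require Import all_classical all_reals all_analysis.
From mathcomp Require Import complex.
Set Implicit Arguments. Unset Strict Implicit. Unset Printing Implicit Defensive.
Import Order.TTheory GRing.Theory Num.Theory.
Import numFieldNormedType.Exports.
Local Open Scope classical_set_scope.
Local Open Scope ring_scope.

(* A Banach lattice X_n = (C^n, N): N is a norm on C^n (complete automatically,
   being finite dimensional) which is monotone: |z_k| <= |w_k| for all k
   implies N z <= N w. *)
Definition is_lattice_norm (R : realType) (n : nat) (N : 'rV[R[i]]_n -> R) :=
  [/\ (forall z, N z = 0 -> z = 0),
      (forall (a : R[i]) z, N (a *: z) = complex.Re `|a| * N z) :> Prop,
      (forall z w : 'rV[R[i]]_n, N (z + w) <= N z + N w),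
      (forall z, 0 <= N z) &
      (forall z w : 'rV[R[i]]_n, (forall k, `|z ord0 k| <= `|w ord0 k|) -> N z <= N w)].

Definition open_ball (R : realType) (n : nat) (N : 'rV[R[i]]_n -> R) :=
  [set z | N z < 1].

Definition monom (R : realType) (n : nat) (alpha : n.-tuple nat)
  (z : 'rV[R[i]]_n) : R[i] :=
  \prod_(k < n) z ord0 k ^+ tnth alpha k.

(* J is given as a duplicate-free list of multi-indices; the k-th index *)
Definition idx (n : nat) (J : seq (n.-tuple nat)) (k : nat) : n.-tuple nat :=
  nth [tuple of nseq n 0%N] J k.

(* P_J(X_n): polynomials sum_{alpha in J} c_alpha z^alpha, represented by
   their coefficient vectors c : 'rV_(size J) (c ord0 k = coefficient of
   z^(idx J k)). *)
Definition polyJ (R : realType) (n : nat) (J : seq (n.-tuple nat))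
  (c : 'rV[R[i]]_(size J)) (z : 'rV[R[i]]_n) : R[i] :=
  \sum_(k < size J) c ord0 k * monom (idx J k) z.
Arguments polyJ {R n} J c z.

Definition polyJ_norm (R : realType) (n : nat) (N : 'rV[R[i]]_n -> R)
  (J : seq (n.-tuple nat)) (c : 'rV[R[i]]_(size J)) : \bar R :=
  ereal_sup [set (complex.Re `|polyJ J c z|)%:E | z in open_ball N].
Arguments polyJ_norm {R n} N J c.

Definition cX (R : realType) (n : nat) (N : 'rV[R[i]]_n -> R)
  (alpha : n.-tuple nat) : R :=
  (fine (ereal_sup [set (complex.Re `|monom alpha z|)%:E | z in open_ball N]))^-1.

Definition lambda_hat (R : realType) (n : nat) (N : 'rV[R[i]]_n -> R)
  (J : seq (n.-tuple nat)) : \bar R :=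
  ereal_sup [set (\sum_(k < size J) cX N (idx J k) * complex.Re `|monom (idx J k) z|)%:E
            | z in open_ball N].

(* I : P_J(X_n) -> Y is a linear isometric embedding (norm on Y is
   K-valued with K = R[i]; it is real, we compare via %:C). *)
Definition isometric_embedding (R : realType) (n : nat)
  (N : 'rV[R[i]]_n -> R) (J : seq (n.-tuple nat))
  (Y : normedModType R[i]) (I : 'rV[R[i]]_(size J) -> Y) :=
  (forall (a : R[i]) c d, I (a *: c + d) = a *: I c + I d) /\
  (forall c, `|I c| = real_complex R (fine (polyJ_norm N J c))).
Arguments isometric_embedding {R n} N J {Y} I.

Definition is_projection_onto (R : realType) (Y : normedModType R[i])
  (E : Type) (I : E -> Y) (Q : Y -> Y) :=
  [/\ (forall (a : R[i]) y y', Q (a *: y + y') = a *: Q y + Q y'),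
      (forall y, exists e, Q y = I e) &
      (forall e, Q (I e) = I e)].

(* "lambda(E) <= L" unfolded: for every Banach space Y, every isometric
   embedding I : E -> Y and every M > L, the infimum of the norms of the
   projections of Y onto I(E) is < M, i.e. some projection has norm <= M. *)
Definition projection_constant_le (R : realType) (n : nat)
  (N : 'rV[R[i]]_n -> R) (J : seq (n.-tuple nat)) (L : \bar R) :=
  forall (Y : completeNormedModType R[i]) (I : 'rV[R[i]]_(size J) -> Y),
    isometric_embedding N J I ->
    forall M : R, (L < M%:E)%E ->
      exists Q : Y -> Y, is_projection_onto I Q /\
        forall y, `|Q y| <= real_complex R M * `|y|.

From HB Require Import structures.
From mathcomp Require Import all_boot all_order all_algebra cyclic separable cyclotomic.
From mathcomp Require Import all_classical all_reals all_analysis.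
From mathcomp Require Import complex.
From mathcomp Require Import ring lra zify.
Set Implicit Arguments. Unset Strict Implicit. Unset Printing Implicit Defensive.
Import Order.TTheory GRing.Theory Num.Theory.
Local Open Scope classical_set_scope.
Local Open Scope ring_scope.
Local Open Scope complex_scope.

(** Averaging a polynomial over the rotations [z_j |-> omega^(t_j) z_j] by
    m-th roots of unity isolates a single term, which gives the Cauchy-type estimate
    [|c_alpha| <= c(alpha) ||P||] for every coefficient functional of P_J(X_n).
    Given an isometric embedding [I] of P_J(X_n) into a Banach space [Y], extend
    each functional [c_alpha o I^-1] from the range of [I] to all of [Y] with the
    same bound by the Hahn-Banach theorem (Zorn's lemma on dominated partial
    functionals, then complexification), and put
    [Q y = I (sum_alpha F_alpha(y) z^alpha)]. Then
    [|Q y (z)| <= sum_alpha c(alpha) |z^alpha| ||y||], whose supremum over the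
    unit ball is [lambda_hat ||y||]. *)

Section ComplexNorm.
Variable R : realType.

Lemma normr_Re (V : normedZmodType R[i]) (v : V) : `|v| = (complex.Re `|v|)%:C.
Proof. by case: `|v| (normr_ge0 v) => a b; rewrite lecE /= => /andP[/eqP -> _]. Qed.

Lemma Re_normr_ge0 (V : normedZmodType R[i]) (v : V) : 0 <= complex.Re `|v|.
Proof. by rewrite -ler0c -normr_Re. Qed.

Lemma Re_le_normr (x : R[i]) : complex.Re x <= complex.Re `|x|.
Proof. by rewrite (le_trans (ler_norm _)) // -lecR -normr_Re normc_ge_Re. Qed.

Lemma Re_normr_real (t : R) : complex.Re `|t%:C| = `|t|.
Proof. by apply: complexI; rewrite -normr_Re normc_def /= expr0n addr0 sqrtr_sqr. Qed.

Lemma Re_normrD (V : normedZmodType R[i]) (v w : V) :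
  complex.Re `|v + w| <= complex.Re `|v| + complex.Re `|w|.
Proof.
by have := ler_normD v w; rewrite (normr_Re (v + w)) (normr_Re v) (normr_Re w) -rmorphD lecR.
Qed.

Lemma Re_normrZ (V : normedModType R[i]) (a : R[i]) (v : V) :
  complex.Re `|a *: v| = complex.Re `|a| * complex.Re `|v|.
Proof. by apply: complexI; rewrite -normr_Re normrZ (normr_Re a) (normr_Re v) -rmorphM. Qed.

Lemma Re_normrM (x y : R[i]) :
  complex.Re `|x * y| = complex.Re `|x| * complex.Re `|y|.
Proof. by apply: complexI; rewrite -normr_Re normrM (normr_Re x) (normr_Re y) -rmorphM. Qed.

Lemma Re_normrX (x : R[i]) k : complex.Re `|x ^+ k| = complex.Re `|x| ^+ k.
Proof. by apply: complexI; rewrite -normr_Re normrX (normr_Re x) -rmorphXn. Qed.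

Lemma Re_normr_prod (I : Type) (r : seq I) (f : I -> R[i]) :
  complex.Re `|\prod_(i <- r) f i| = \prod_(i <- r) complex.Re `|f i|.
Proof.
apply: complexI; rewrite -normr_Re normr_prod rmorph_prod.
by apply: eq_bigr => i _; exact: normr_Re.
Qed.

Lemma Re_normr_sum (I : Type) (r : seq I) (f : I -> R[i]) :
  complex.Re `|\sum_(i <- r) f i| <= \sum_(i <- r) complex.Re `|f i|.
Proof.
elim/big_ind2: _ => [|x a y b xa yb|//]; first by rewrite normr0.
by apply: le_trans (Re_normrD _ _) _; exact: lerD.
Qed.

End ComplexNorm.

Section RealHahnBanach.
Variables (R : realType) (V : lmodType R) (p : V -> R).
Hypothesis p_subadd : forall x y, p (x + y) <= p x + p y.
Hypothesis p_homo : forall (t : R) x, 0 <= t -> p (t *: x) = t * p x.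

(* A partial linear functional below [p], given by its graph. *)
Definition dominated_graph (G : set (V * R)) :=
  [/\ G (0, 0),
      forall x y a b t, G (x, a) -> G (y, b) -> G (x + t *: y, a + t * b) &
      forall x a, G (x, a) -> a <= p x].

Lemma sublinear0 : p 0 = 0.
Proof. by have := p_homo 0 (lexx 0); rewrite scale0r mul0r. Qed.

Section DominatedGraph.
Variable G : set (V * R).
Hypothesis domG : dominated_graph G.

Lemma dominated_graphZ x a t : G (x, a) -> G (t *: x, t * a).
Proof. by case: domG => G00 GD _ /(GD _ _ _ _ t G00); rewrite !add0r. Qed.

Lemma dominated_graph_functional x a b : G (x, a) -> G (x, b) -> a = b.
Proof.
case: domG => _ GD Gp Ga Gb.
have := Gp _ _ (GD _ _ _ _ (-1) Ga Gb); have := Gp _ _ (GD _ _ _ _ (-1) Gb Ga).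
by rewrite scaleN1r subrr sublinear0; lra.
Qed.

Lemma dominated_graph_separation y0 : exists c, forall x a, G (x, a) ->
  a - p (x - y0) <= c /\ c <= p (x + y0) - a.
Proof.
case: domG => G00 GD Gp.
have lower_upper x a x' a' : G (x, a) -> G (x', a') ->
    a - p (x - y0) <= p (x' + y0) - a'.
  move=> Gx Gx'; have := Gp _ _ (GD _ _ _ _ 1 Gx Gx').
  have := p_subadd (x - y0) (x' + y0).
  by rewrite addrACA addNr addr0 scale1r mul1r; lra.
pose S := [set u.2 - p (u.1 - y0) | u in G].
have S0 : S !=set0 by exists (0 - p (0 - y0)), (0, 0).
have S_ub x' a' : G (x', a') -> ubound S (p (x' + y0) - a').
  by move=> Gx' _ [[x a] Gx <-]; exact: lower_upper Gx Gx'.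
exists (sup S) => x a Gx; split.
  apply: sup_upper_bound; last by exists (x, a).
  by split => //; exists (p (0 + y0) - 0); exact: S_ub.
exact: ge_sup (S_ub _ _ Gx).
Qed.

Definition graph_extension y0 c : set (V * R) :=
  [set (u.1 + t *: y0, u.2 + t * c) | u in G & t in setT].

Lemma graph_extension_proper y0 c :
  ~ (exists a, G (y0, a)) -> G `<` graph_extension y0 c.
Proof.
case: domG => G00 _ _ ny0; split => [[x a] Gx|].
  by exists (x, a) => //; exists 0 => //=; rewrite scale0r mul0r !addr0.
move=> /(_ (y0, c)) sub; apply: ny0; exists c; apply: sub.
by exists (0, 0) => //; exists 1 => //=; rewrite scale1r mul1r !add0r.
Qed.

Lemma graph_extension_dominated y0 c :
  (forall x a, G (x, a) -> a - p (x - y0) <= c /\ c <= p (x + y0) - a) ->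
  dominated_graph (graph_extension y0 c).
Proof.
case: domG => G00 GD Gp sep; split.
- by exists (0, 0) => //; exists 0 => //=; rewrite scale0r mul0r !addr0.
- move=> _ _ _ _ s [[x a] Gx [t _ [<- <-]]] [[x' a'] Gx' [t' _ [<- <-]]].
  exists (x + s *: x', a + s * a'); first exact: GD.
  exists (t + s * t') => //=; congr pair; last by ring.
  by rewrite scalerDr scalerDl scalerA addrACA.
move=> _ _ [[x a] Gx [t _ [<- <-]]] /=.
have [t0|t0|->] := ltgtP t 0; last by rewrite scale0r mul0r !addr0; exact: Gp.
- have nt0 : 0 < - t by rewrite oppr_gt0.
  have /sep[+ _] := dominated_graphZ (- t)^-1 Gx.
  have -> : x + t *: y0 = (- t) *: ((- t)^-1 *: x - y0).
    by rewrite scalerBr scalerA mulfV ?gt_eqF // scale1r scaleNr opprK.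
  rewrite p_homo ?(ltW nt0) // => sep_t.
  have := ler_wpM2l (ltW nt0) sep_t.
  rewrite mulrBr mulrA mulfV ?gt_eqF // mul1r; lra.
- have /sep[_] := dominated_graphZ t^-1 Gx.
  have -> : x + t *: y0 = t *: (t^-1 *: x + y0).
    by rewrite scalerDr scalerA mulfV ?gt_eqF // scale1r.
  rewrite p_homo ?(ltW t0) // => sep_t.
  have := ler_wpM2l (ltW t0) sep_t.
  rewrite mulrBr mulrA mulfV ?gt_eqF // mul1r; lra.
Qed.

End DominatedGraph.

Section Extension.
Variable G0 : set (V * R).
Hypothesis domG0 : dominated_graph G0.

Lemma dominated_graph_chain (F : set (set (V * R))) :
  (forall X, F X -> dominated_graph (G0 `|` X)) -> total_on F subset ->
  dominated_graph (G0 `|` \bigcup_(X in F) X).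
Proof.
move=> domF totF.
have common u v : (G0 `|` \bigcup_(X in F) X) u -> (G0 `|` \bigcup_(X in F) X) v ->
    exists2 X, dominated_graph (G0 `|` X) &
      [/\ G0 `|` X `<=` G0 `|` \bigcup_(X in F) X, (G0 `|` X) u & (G0 `|` X) v].
  have sub X : F X -> G0 `|` X `<=` G0 `|` \bigcup_(X in F) X.
    by move=> FX w [G0w|Xw]; [left|right; exists X].
  case=> [G0u|[X FX Xu]] [G0v|[Y FY Yv]].
  - by exists set0; rewrite ?setU0 //; split => //; exact: subsetUl.
  - by exists Y; [exact: domF|split; [exact: sub|left|right]].
  - by exists X; [exact: domF|split; [exact: sub|right|left]].
  - have [XY|YX] := totF _ _ FX FY.
      by exists Y; [exact: domF|split; [exact: sub|right; exact: XY|right]].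
    by exists X; [exact: domF|split; [exact: sub|right|right; exact: YX]].
split; first by left; case: domG0.
- move=> x y a b t Gx Gy; have [X [_ GD _] [sub GXx GXy]] := common _ _ Gx Gy.
  exact/sub/GD.
- by move=> x a Gx; have [X [_ _ Gp] [_ GXx _]] := common _ _ Gx Gx; exact: Gp.
Qed.

Lemma hahn_banach_graph : exists g : V -> R,
  [/\ scalar g, forall x a, G0 (x, a) -> g x = a & forall x, g x <= p x].
Proof.
(* Zorn's lemma runs over the sets [X] with [G0 `|` X] dominated, so that the
   empty chain is harmless. *)
have [A [domA maxA]] := Zorn_bigcup (@dominated_graph_chain).
have total y : exists a, (G0 `|` A) (y, a).
  apply: contrapT => ny.
  have [c sep] := dominated_graph_separation domA y.
  have [subE nsubE] := graph_extension_proper domA c ny.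
  apply: (maxA (graph_extension (G0 `|` A) y c)).
    split=> [u Au|EA]; first by apply: subE; right.
    by apply: nsubE => u /EA; right.
  rewrite setUidr => [|u G0u]; last by apply: subE; left.
  exact: graph_extension_dominated.
have [g Gg] := choice total.
have [_ GD Gp] := domA.
exists g; split => [t x y|x a G0x|x]; last exact: Gp.
- apply: (dominated_graph_functional domA (Gg _)).
  by rewrite [t *: x + y]addrC [t * g x + g y]addrC; exact: GD.
- by apply: (dominated_graph_functional domA (Gg _)); left.
Qed.

End Extension.

End RealHahnBanach.

Definition realified (R : realType) (V : lmodType R[i]) : Type := V.

HB.instance Definition _ (R : realType) (V : lmodType R[i]) :=
  GRing.Zmodule.on (realified V).

Section Realified.
Variables (R : realType) (V : lmodType R[i]).

Definition realified_scale (t : R) (v : realified V) : realified V := t%:C *: (v : V).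

Lemma realified_scaleA s t v :
  realified_scale s (realified_scale t v) = realified_scale (s * t) v.
Proof. by rewrite /realified_scale scalerA rmorphM. Qed.

Lemma realified_scale1 : left_id 1 realified_scale.
Proof. by move=> v; rewrite /realified_scale rmorph1 scale1r. Qed.

Lemma realified_scaleDr : right_distributive realified_scale +%R.
Proof. by move=> t v w; rewrite /realified_scale scalerDr. Qed.

Lemma realified_scaleDl v : {morph realified_scale^~ v : s t / s + t}.
Proof. by move=> s t; rewrite /realified_scale rmorphD scalerDl. Qed.

HB.instance Definition _ := GRing.Zmodule_isLmodule.Build R (realified V)
  realified_scaleA realified_scale1 realified_scaleDr realified_scaleDl.

End Realified.

Section Complexification.
Variables (R : realType) (V : lmodType R[i]).

Definition complexify (g : V -> R) (v : V) : R[i] := (g v)%:C - 'i * (g ('i *: v))%:C.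

Lemma complexify_scalar (g : realified V -> R) : scalar g -> scalar (complexify g).
Proof.
move=> g_scalar.
have gL t (x y : V) : g (t%:C *: x + y) = t * g x + g y by exact: g_scalar.
have g0 : g 0 = 0 by have := gL (-1) 0 0; rewrite scaler0 addr0 mulN1r addNr.
have gD x y : g (x + y) = g x + g y by have := gL 1 x y; rewrite scale1r mul1r.
have gZ t x : g (t%:C *: x) = t * g x by have := gL t x 0; rewrite !addr0 g0 addr0.
have FD x y : complexify g (x + y) = complexify g x + complexify g y.
  by rewrite /complexify scalerDr !gD !rmorphD mulrDr opprD addrACA.
have FZ t x : complexify g (t%:C *: x) = t%:C * complexify g x.
  rewrite /complexify.
  have -> : 'i *: (t%:C *: x) = t%:C *: ('i *: x) by rewrite !scalerA mulrC.
  by rewrite !gZ !rmorphM mulrBr mulrCA.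
have Fi x : complexify g ('i *: x) = 'i * complexify g x.
  rewrite /complexify scalerA -expr2 sqr_i scaleN1r.
  have := gZ (-1) x; rewrite rmorphN rmorph1 scaleN1r mulN1r => ->.
  by rewrite rmorphN mulrN opprK mulrBr mulrA -expr2 sqr_i mulN1r opprK addrC.
move=> a x y; rewrite FD; congr (_ + _).
rewrite [a in LHS]complexE [a in RHS]complexE scalerDl FD FZ -scalerA Fi FZ.
by rewrite mulrDl mulrA.
Qed.

Lemma Re_complexify (g : V -> R) v : complex.Re (complexify g v) = g v.
Proof. by rewrite /= mul0r mulr0 subr0 subr0. Qed.

Lemma complexify_Re (h : V -> R[i]) : scalar h ->
  forall v, complexify (fun v => complex.Re (h v)) v = h v.
Proof.
move=> h_scalar v; have := h_scalar 'i v 0; rewrite !addr0 /complexify => ->.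
have h0 : h 0 = 0 by have := h_scalar (-1) 0 0; rewrite scaler0 addr0 mulN1r addNr.
rewrite h0 addr0 [in RHS](complexE (h v)); congr (_ + _).
by case: (h v) => a b /=; rewrite mul0r mul1r sub0r rmorphN mulrN opprK.
Qed.

End Complexification.

Section ComplexHahnBanach.
Variables (R : realType) (Y : normedModType R[i]).

Lemma normr_le_of_Re_le (F : Y -> R[i]) (K : R) : 0 <= K -> scalar F ->
  (forall y, complex.Re (F y) <= K * complex.Re `|y|) ->
  forall y, `|F y| <= K%:C * `|y|.
Proof.
move=> K0 F_scalar ReF y.
have F0 : F 0 = 0 by have := F_scalar (-1) 0 0; rewrite scaler0 addr0 mulN1r addNr.
have FZ a x : F (a *: x) = a * F x by have := F_scalar a x 0; rewrite !addr0 F0 addr0.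
have [->|Fy0] := eqVneq (F y) 0; first by rewrite normr0 mulr_ge0 ?ler0c ?normr_ge0.
(* Rotating [y] by the phase of [F y] makes [F] real and nonnegative there. *)
pose w := `|F y| / F y.
have w1 : complex.Re `|w| = 1.
  by apply: complexI; rewrite -normr_Re normf_div normr_id divff // normr_eq0.
have := ReF (w *: y); rewrite FZ /w divfK // Re_normrZ w1 mul1r.
by rewrite (normr_Re (F y)) (normr_Re y) -rmorphM lecR.
Qed.

Lemma hahn_banach_complex (E : lmodType R[i]) (I : E -> Y) (phi : E -> R[i]) (K : R) :
  0 <= K -> linear I -> scalar phi -> (forall e, `|phi e| <= K%:C * `|I e|) ->
  exists F : Y -> R[i],
    [/\ scalar F, forall e, F (I e) = phi e & forall y, `|F y| <= K%:C * `|y|].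
Proof.
move=> K0 I_linear phi_scalar phi_le.
pose p (y : realified Y) := K * complex.Re `|y : Y|.
have p_subadd x y : p (x + y) <= p x + p y by rewrite -mulrDr ler_wpM2l ?Re_normrD.
have p_homo t x : 0 <= t -> p (t *: x) = t * p x.
  by move=> t0; rewrite /p Re_normrZ Re_normr_real ger0_norm // mulrCA.
have I0 : I 0 = 0 by have := I_linear (-1) 0 0; rewrite scaler0 addr0 scaleN1r addNr.
have phi0 : phi 0 = 0.
  by have := phi_scalar (-1) 0 0; rewrite scaler0 addr0 mulN1r addNr.
pose G0 := [set (I e : realified Y, complex.Re (phi e)) | e in setT].
have domG0 : dominated_graph p G0.
  split.
  - by exists 0 => //; rewrite I0 phi0.
  - move=> _ _ _ _ t [e _ [<- <-]] [e' _ [<- <-]]; exists (t%:C *: e' + e) => //.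
    rewrite I_linear phi_scalar addrC; congr pair.
    by case: (phi e) (phi e') => [a b] [c d] /=; lra.
  - move=> _ _ [e _ [<- <-]]; apply: le_trans (Re_le_normr _) _.
    by have := phi_le e; rewrite (normr_Re (phi e)) (normr_Re (I e)) -rmorphM lecR.
have [g [g_scalar gG0 g_le]] := hahn_banach_graph p_subadd p_homo domG0.
have gI e : g (I e) = complex.Re (phi e) by apply: gG0; exists e.
exists (complexify g); split.
- exact: complexify_scalar.
- move=> e; rewrite -(complexify_Re phi_scalar) /complexify.
  have -> : 'i *: I e = I ('i *: e) by have := I_linear 'i e 0; rewrite !addr0 I0 addr0.
  by rewrite !gI.
- apply: normr_le_of_Re_le => // [|y]; first exact: complexify_scalar.
  by rewrite Re_complexify; exact: g_le.
Qed.

End ComplexHahnBanach.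

(* The proof of [C_prim_root_exists], which the library states only for [algC]. *)
Lemma closed_field_prim_root (F : closedFieldType) n :
  n%:R != 0 :> F -> {z : F | n.-primitive_root z}.
Proof.
move=> n_neq0; have n_gt0 : (0 < n)%N by case: n n_neq0; rewrite ?eqxx.
pose p : {poly F} := 'X^n - 1; have [r Dp] := closed_field_poly_normal p.
apply/sigW; rewrite (monicP _) ?monicXnsubC // scale1r in Dp.
have rn1 : all n.-unity_root r by apply/allP=> z; rewrite -root_prod_XsubC -Dp.
have sz_r : (n < (size r).+1)%N by rewrite -(size_prod_XsubC r id) -Dp size_XnsubC.
have [|z] := hasP (has_prim_root n_gt0 rn1 _ sz_r); last by exists z.
by rewrite -separable_prod_XsubC -Dp separable_Xn_sub_1.
Qed.

Lemma prim_root_sum_expM (F : idomainType) (z : F) m k : m.-primitive_root z ->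
  \sum_(s < m) z ^+ (s * k) = if (m %| k)%N then m%:R else 0.
Proof.
move=> zP; case: ifP => [mk|mNk].
  rewrite (eq_bigr (fun _ => 1)) ?sumr_const ?card_ord // => s _.
  by apply/eqP; rewrite -(prim_order_dvd zP) dvdn_mull.
have x1 : z ^+ k != 1 by rewrite -(prim_order_dvd zP) mNk.
have xm : (z ^+ k) ^+ m = 1 by rewrite exprAC (prim_expr_order zP) expr1n.
rewrite (eq_bigr (fun s : 'I_m => (z ^+ k) ^+ s)) => [|s _]; last by rewrite mulnC exprM.
have /eqP := subrX1 (z ^+ k) m; rewrite xm subrr eq_sym mulf_eq0 subr_eq0.
by rewrite (negbTE x1) => /eqP.
Qed.

(* The exponent [be + (m - al)] is [be - al] modulo [m], written without
   truncated subtraction. *)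
Lemma prim_root_grid_sum (F : idomainType) (z : F) m n (al be : n.-tuple nat) :
  m.-primitive_root z -> (forall j, tnth al j < m)%N -> (forall j, tnth be j < m)%N ->
  \sum_(t : {ffun 'I_n -> 'I_m}) \prod_(j < n) z ^+ (t j * (tnth be j + (m - tnth al j)))
    = if be == al then (m ^ n)%:R else 0.
Proof.
move=> zP al_lt be_lt.
rewrite -(bigA_distr_bigA (fun j (s : 'I_m) => z ^+ (s * (tnth be j + (m - tnth al j))))) /=.
under eq_bigr => j _ do rewrite prim_root_sum_expM //.
have dvd j : (m %| tnth be j + (m - tnth al j))%N = (tnth be j == tnth al j).
  have := al_lt j; have := be_lt j => be_j al_j; apply/idP/eqP => [|->].
    by case/dvdnP => [[|[|q]]]; lia.
  by rewrite subnKC ?dvdnn // ltnW.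
case: eqP => [be_al|ne].
  rewrite (eq_bigr (fun _ => m%:R)) => [|j _]; last by rewrite dvd be_al eqxx.
  by rewrite prodr_const card_ord natrX.
have [j nej] : exists j, tnth be j != tnth al j.
  apply/existsP; apply: contraT; rewrite negb_exists => /forallP eqj.
  by case: ne; apply: eq_from_tnth => j; apply/eqP; rewrite -[_ == _]negbK eqj.
by rewrite (bigD1 j) //= dvd (negbTE nej) mul0r.
Qed.

Section BoundedSup.
Variables (R : realType) (T : Type) (A : set T) (f : T -> R).
Hypothesis A0 : A !=set0.

Lemma ereal_sup_image_EFin : (exists b, forall t, A t -> f t <= b) ->
  ereal_sup [set (f t)%:E | t in A] = (sup [set f t | t in A])%:E.
Proof.
move=> [b fb]; rewrite -(image_comp f EFin); apply: ereal_sup_EFin.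
  by exists b => _ [t At <-]; exact: fb.
by case: A0 => t At; exists (f t), t.
Qed.

Lemma le_fine_ereal_sup_image t : (exists b, forall t, A t -> f t <= b) ->
  A t -> f t <= fine (ereal_sup [set (f t)%:E | t in A]).
Proof.
move=> [b fb] At; rewrite ereal_sup_image_EFin; last by exists b.
apply: ub_le_sup; last by exists t.
by exists b => _ [s As <-]; exact: fb.
Qed.

Lemma fine_ereal_sup_image_le b : (forall t, A t -> f t <= b) ->
  fine (ereal_sup [set (f t)%:E | t in A]) <= b.
Proof.
move=> fb; rewrite ereal_sup_image_EFin; last by exists b.
by apply: ge_sup => [|_ [t At <-]]; [case: A0 => t At; exists (f t), t|exact: fb].
Qed.

End BoundedSup.

Section LatticeNorm.
Variables (R : realType) (n : nat) (N : 'rV[R[i]]_n -> R).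
Hypothesis N_lattice : is_lattice_norm N.

Lemma lattice_normZ a (z : 'rV[R[i]]_n) : N (a *: z) = complex.Re `|a| * N z.
Proof. by case: N_lattice. Qed.

Lemma lattice_norm0 : N 0 = 0.
Proof. by rewrite -(scale0r 0) lattice_normZ normr0 mul0r. Qed.

Lemma lattice_norm_le (z w : 'rV[R[i]]_n) :
  (forall j, complex.Re `|z ord0 j| <= complex.Re `|w ord0 j|) -> N z <= N w.
Proof.
case: N_lattice => _ _ _ _ N_mono zw; apply: N_mono => j.
by rewrite (normr_Re (z ord0 j)) (normr_Re (w ord0 j)) lecR.
Qed.

Lemma open_ball0 : open_ball N 0.
Proof. by rewrite /open_ball /= lattice_norm0. Qed.

Lemma lattice_norm_delta_gt0 j : 0 < N (delta_mx ord0 j).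
Proof.
case: N_lattice => N_eq0 _ _ N_ge0 _; rewrite lt_neqAle N_ge0 andbT eq_sym.
by apply/eqP => /N_eq0 /rowP /(_ j); rewrite !mxE !eqxx => /eqP; rewrite oner_eq0.
Qed.

Lemma coord_le_on_ball (z : 'rV[R[i]]_n) j :
  open_ball N z -> complex.Re `|z ord0 j| <= (N (delta_mx ord0 j))^-1.
Proof.
move=> zB; rewrite -[_^-1]mul1r ler_pdivlMr ?lattice_norm_delta_gt0 //.
rewrite -lattice_normZ; apply: le_trans (ltW zB); apply: lattice_norm_le => k.
rewrite !mxE; have [->|_] := eqVneq k j; first by rewrite eqxx mulr1.
by rewrite mulr0 normr0 Re_normr_ge0.
Qed.

Lemma Re_normr_monom al (z : 'rV[R[i]]_n) :
  complex.Re `|monom al z| = \prod_(j < n) complex.Re `|z ord0 j| ^+ tnth al j.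
Proof. by rewrite Re_normr_prod; apply: eq_bigr => j _; rewrite Re_normrX. Qed.

Lemma monom_bounded_on_ball al :
  exists b, forall z, open_ball N z -> complex.Re `|monom al z| <= b.
Proof.
exists (\prod_(j < n) (N (delta_mx ord0 j))^-1 ^+ tnth al j) => z zB.
rewrite Re_normr_monom; apply: ler_prod => j _.
rewrite exprn_ge0 ?Re_normr_ge0 // lerXn2r ?nnegrE ?Re_normr_ge0 ?coord_le_on_ball //.
by rewrite invr_ge0 ltW ?lattice_norm_delta_gt0.
Qed.

Lemma monom_le_cXV al (z : 'rV[R[i]]_n) :
  open_ball N z -> complex.Re `|monom al z| <= (cX N al)^-1.
Proof.
move=> zB; rewrite /cX invrK; apply: le_fine_ereal_sup_image zB.
  by exists 0; exact: open_ball0.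
exact: monom_bounded_on_ball.
Qed.

Lemma cXV_le al b : (forall z, open_ball N z -> complex.Re `|monom al z| <= b) ->
  (cX N al)^-1 <= b.
Proof. by rewrite /cX invrK; apply: fine_ereal_sup_image_le; exists 0; exact: open_ball0. Qed.

Lemma open_ball_const : exists2 t : R, 0 < t & open_ball N (const_mx t%:C).
Proof.
have N1_ge0 : 0 <= N (const_mx 1) by case: N_lattice.
exists (N (const_mx 1) + 1)^-1; first by rewrite invr_gt0 ltr_wpDl.
rewrite /open_ball /= -[t in const_mx t]mulr1 -scalemx_const lattice_normZ.
rewrite Re_normr_real ger0_norm ?invr_ge0 ?addr_ge0 // mulrC ltr_pdivrMr ?ltr_wpDl //.
by rewrite mul1r ltrDl.
Qed.

Lemma cX_gt0 al : 0 < cX N al.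
Proof.
have [t t0 tB] := open_ball_const; rewrite -invr_gt0.
apply: lt_le_trans (monom_le_cXV al tB); rewrite Re_normr_monom.
by apply: prodr_gt0 => j _; rewrite mxE Re_normr_real gtr0_norm // exprn_gt0.
Qed.

End LatticeNorm.

Lemma idx_inj n (J : seq (n.-tuple nat)) (l k : 'I_(size J)) :
  uniq J -> (idx J l == idx J k) = (l == k).
Proof. by move=> uJ; rewrite /idx nth_uniq. Qed.

Lemma polyJ_coef_average (R : realType) n (J : seq (n.-tuple nat))
    (c : 'rV[R[i]]_(size J)) (k : 'I_(size J)) (w : 'rV[R[i]]_n) (z : R[i]) m :
  uniq J -> m.-primitive_root z -> (forall (l : 'I_(size J)) j, tnth (idx J l) j < m)%N ->
  \sum_(t : {ffun 'I_n -> 'I_m})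
      (\prod_(j < n) z ^+ (t j * (m - tnth (idx J k) j))) *
      polyJ J c (\row_j (z ^+ t j * w ord0 j))
    = (m ^ n)%:R * (c ord0 k * monom (idx J k) w).
Proof.
move=> uJ zP idx_lt.
have term l : \sum_(t : {ffun 'I_n -> 'I_m})
      (\prod_(j < n) z ^+ (t j * (m - tnth (idx J k) j))) *
      (c ord0 l * monom (idx J l) (\row_j (z ^+ t j * w ord0 j)))
    = c ord0 l * monom (idx J l) w * if l == k then (m ^ n)%:R else 0.
  rewrite -idx_inj // -(prim_root_grid_sum zP) // mulr_sumr; apply: eq_bigr => t _.
  rewrite /monom mulrCA -mulrA; congr (_ * _).
  rewrite -!big_split /=; apply: eq_bigr => j _.
  by rewrite mxE exprMn -exprM mulrA -exprD -mulnDr addnC mulrC.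
transitivity (\sum_(l < size J) c ord0 l * monom (idx J l) w *
                 if l == k then (m ^ n)%:R else 0).
  rewrite /polyJ; under eq_bigr => t _ do rewrite mulr_sumr.
  by rewrite exchange_big /=; apply: eq_bigr => l _; exact: term.
rewrite (bigD1 k) //= eqxx big1 => [|l /negbTE ->]; last by rewrite mulr0.
by rewrite addr0 mulrC.
Qed.

Section PolyJNorm.
Variables (R : realType) (n : nat) (N : 'rV[R[i]]_n -> R) (J : seq (n.-tuple nat)).
Hypothesis N_lattice : is_lattice_norm N.

Definition polyJ_rnorm (c : 'rV[R[i]]_(size J)) : R := fine (polyJ_norm N J c).

Lemma polyJ_bounded_on_ball c :
  exists b, forall z, open_ball N z -> complex.Re `|polyJ J c z| <= b.
Proof.
exists (\sum_(l < size J) complex.Re `|c ord0 l| * (cX N (idx J l))^-1) => z zB.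
rewrite /polyJ; apply: le_trans (Re_normr_sum _ _) _; apply: ler_sum => l _.
by rewrite Re_normrM ler_wpM2l ?Re_normr_ge0 ?(monom_le_cXV N_lattice _ zB).
Qed.

Lemma polyJ_le_rnorm c z :
  open_ball N z -> complex.Re `|polyJ J c z| <= polyJ_rnorm c.
Proof.
move=> zB; apply: le_fine_ereal_sup_image zB; first by exists 0; exact: open_ball0 N_lattice.
exact: polyJ_bounded_on_ball.
Qed.

Lemma polyJ_rnorm_le c b :
  (forall z, open_ball N z -> complex.Re `|polyJ J c z| <= b) -> polyJ_rnorm c <= b.
Proof. by apply: fine_ereal_sup_image_le; exists 0; exact: open_ball0 N_lattice. Qed.

Lemma polyJ_rnorm_ge0 c : 0 <= polyJ_rnorm c.
Proof. exact: le_trans (Re_normr_ge0 _) (polyJ_le_rnorm c (open_ball0 N_lattice)). Qed.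

Lemma coef_monom_le_rnorm (c : 'rV[R[i]]_(size J)) (k : 'I_(size J)) w :
  uniq J -> open_ball N w ->
  complex.Re `|c ord0 k| * complex.Re `|monom (idx J k) w| <= polyJ_rnorm c.
Proof.
move=> uJ wB.
(* [m] exceeds every exponent occurring in [J], so distinct multi-indices of [J]
   stay distinct modulo [m]. *)
pose m := (\max_(l < size J) \max_(j < n) tnth (idx J l) j).+1.
have idx_lt (l : 'I_(size J)) j : (tnth (idx J l) j < m)%N.
  rewrite ltnS; apply: leq_trans (leq_bigmax (F := fun j => tnth (idx J l) j) j) _.
  exact: (leq_bigmax (F := fun l : 'I_(size J) => \max_(j < n) tnth (idx J l) j)%N l).
have m_gt0 : (0 < m)%N by [].
have [z zP] : {z : R[i] | m.-primitive_root z}.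
  by apply: closed_field_prim_root; rewrite pnatr_eq0.
have z1 : complex.Re `|z| = 1.
  apply: complexI; rewrite -normr_Re; apply/eqP.
  by rewrite -(pexpr_eq1 m_gt0) ?normr_ge0 // -normrX (prim_expr_order zP) normr1.
pose wt (t : {ffun 'I_n -> 'I_m}) := \row_j (z ^+ t j * w ord0 j).
have wtB t : open_ball N (wt t).
  apply: le_lt_trans wB; apply: lattice_norm_le => // j.
  by rewrite mxE Re_normrM Re_normrX z1 expr1n mul1r.
have := polyJ_coef_average c k w uJ zP idx_lt.
move=> /(congr1 (fun x => complex.Re `|x|)); rewrite Re_normrM -(rmorph_nat (real_complex R)).
rewrite Re_normr_real normr_nat Re_normrM => avg.
have mn_gt0 : 0 < (m ^ n)%:R :> R by rewrite ltr0n expn_gt0 m_gt0.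
rewrite -(ler_pM2l mn_gt0) -avg.
apply: le_trans (Re_normr_sum _ _) _.
have -> : (m ^ n)%:R * polyJ_rnorm c = \sum_(t : {ffun 'I_n -> 'I_m}) polyJ_rnorm c.
  by rewrite sumr_const card_ffun !card_ord mulr_natl.
apply: ler_sum => t _; rewrite Re_normrM Re_normr_prod.
rewrite (eq_bigr (fun _ => 1)) => [|j _]; last by rewrite Re_normrX z1 expr1n.
by rewrite big1_eq mul1r; exact: polyJ_le_rnorm (wtB t).
Qed.

Lemma coef_le_cX_rnorm (c : 'rV[R[i]]_(size J)) (k : 'I_(size J)) : uniq J ->
  complex.Re `|c ord0 k| <= cX N (idx J k) * polyJ_rnorm c.
Proof.
move=> uJ; have cX_pos := cX_gt0 N_lattice (idx J k).
have [->|ck0] := eqVneq (c ord0 k) 0.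
  by rewrite normr0; exact: mulr_ge0 (ltW cX_pos) (polyJ_rnorm_ge0 c).
have ck_gt0 : 0 < complex.Re `|c ord0 k|.
  rewrite lt_def Re_normr_ge0 andbT; apply: contra ck0 => /eqP Re_c0.
  by rewrite -normr_eq0 normr_Re Re_c0 raddf0.
have : (cX N (idx J k))^-1 <= polyJ_rnorm c / complex.Re `|c ord0 k|.
  apply: cXV_le => // w wB; rewrite ler_pdivlMr // mulrC.
  exact: coef_monom_le_rnorm.
rewrite ler_pdivlMr // => le_cXV.
rewrite -[X in X <= _]mul1r -(mulfV (lt0r_neq0 cX_pos)) -mulrA.
by apply: ler_wpM2l => //; exact: ltW.
Qed.

Lemma polyJ_rnorm_le_lambda_hat (c : 'rV[R[i]]_(size J)) (r M : R) :
  0 <= r -> (lambda_hat N J < M%:E)%E ->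
  (forall k, complex.Re `|c ord0 k| <= cX N (idx J k) * r) -> polyJ_rnorm c <= M * r.
Proof.
move=> r0 lt_M c_le; apply: polyJ_rnorm_le => z zB.
have sum_lt : \sum_(k < size J) cX N (idx J k) * complex.Re `|monom (idx J k) z| < M.
  by rewrite -lte_fin; apply: le_lt_trans lt_M; apply: ereal_sup_ubound; exists z.
rewrite mulrC; apply: le_trans (ler_wpM2l r0 (ltW sum_lt)).
rewrite /polyJ mulr_sumr; apply: le_trans (Re_normr_sum _ _) (ler_sum _ _) => k _.
rewrite Re_normrM mulrA [r * _]mulrC; apply: ler_wpM2r; first exact: Re_normr_ge0.
exact: c_le.
Qed.

End PolyJNorm.

Theorem theorem2p18 (R : realType) (n : nat) (N : 'rV[R[i]]_n -> R)
  (J : seq (n.-tuple nat)) :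
  is_lattice_norm N -> uniq J ->
  projection_constant_le N J (lambda_hat N J).
Proof.
move=> N_lattice uJ Y I [I_linear I_iso] M lt_M.
have coef_ext k : exists F : Y -> R[i], [/\ scalar F, forall c, F (I c) = c ord0 k &
    forall y, `|F y| <= (cX N (idx J k))%:C * `|y|].
  apply: hahn_banach_complex => // [|a c d|c]; first exact/ltW/cX_gt0.
    by rewrite !mxE.
  by rewrite I_iso (normr_Re (c ord0 k)) -rmorphM lecR; exact: coef_le_cX_rnorm.
have [F F_ext] := choice coef_ext.
pose coefs y := \row_k F k y.
exists (fun y => I (coefs y)); split; first split.
- move=> a y y'; rewrite -I_linear; congr I; apply/rowP => k; rewrite !mxE.
  by have [F_scalar _ _] := F_ext k; exact: F_scalar.
- by move=> y; exists (coefs y).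
- move=> c; congr I; apply/rowP => k; rewrite mxE.
  by have [_ -> _] := F_ext k.
move=> y; rewrite I_iso (normr_Re y) -rmorphM lecR.
apply: polyJ_rnorm_le_lambda_hat => // [|k]; first exact: Re_normr_ge0.
have [_ _ /(_ y)] := F_ext k; rewrite mxE.
by rewrite (normr_Re (F k y)) (normr_Re y) -rmorphM lecR.
Qed.
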